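(* Let $S_1,\ldots,S_n$ be Polish spaces, $\mu$ a Borel probability measure on $S=\prod_iS_i$ and $\mathcal{I}$ a collection of subsets of $\{1,\ldots,n\}$. For every $f\in L^\infty(\mu)$ and every $d\ge1$ we have the pointwise estimate \[ \big|\mathfrak{h}\,|\mathfrak{h}^{(d)}f|\big|\le|\mathfrak{h}^{(d+1)}f| . \]
   Context: Notation: for $I\subset\{1,\ldots,n\}$ and $x\in S$, $\overline{x_I}=(x_i)_{i\notin I}$, and $(\overline{x_I},y_I)$ is the point with coordinates $y_i$ for $i\in I$, $x_i$ otherwise. $(m_{\overline{x_I}})$ is the disintegration of $\mu$ with respect to $\overline{x_I}$: probability measures on $\prod_{i\in I}S_i$ with $\int g\,d\mu=\int\int g(\overline{x_I},y_I)\,dm_{\overline{x_I}}(y_I)\,d\overline{\mu_I}(\overline{x_I})$, $\overline{\mu_I}$ the law of $\overline{x_I}$. For $I\in\mathcal{I}$ and a function $g$, $\mathfrak{h}_Ig(x)=\frac1{\sqrt2}\|g(\overline{x_I},y_I)-g(\overline{x_I},z_I)\|_{L^\infty(m_{\overline{x_I}}\otimes m_{\overline{x_I}}(y_I,z_I))}$, $|\mathfrak{h}g|=(\sum_{I\in\mathcal{I}}(\mathfrak{h}_Ig)^2)^{1/2}$; iteratively $\mathfrak{h}_{I_1\ldots I_d}g=\mathfrak{h}_{I_1}(\mathfrak{h}_{I_2\ldots I_d}g)$, and $|\mathfrak{h}^{(d)}g|=(\sum_{(I_1,\ldots,I_d)\in\mathcal{I}^d}(\mathfrak{h}_{I_1\ldots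 I_d}g)^2)^{1/2}$. *)

From HB Require Import structures.
From mathcomp Require Import all_boot all_order all_algebra.
From mathcomp Require Import all_classical all_reals all_analysis.
From mathcomp Require Import ess_sup_inf measurable_realfun lebesgue_measure lebesgue_integral kernel.
Set Implicit Arguments. Unset Strict Implicit. Unset Printing Implicit Defensive.
Import Order.TTheory GRing.Theory Num.Theory.
Import numFieldNormedType.Exports.
Local Open Scope classical_set_scope.
Local Open Scope ring_scope.

Definition polish (R : realType) (T : topologicalType) : Prop :=
  (exists D : set T, countable D /\ dense D) /\
  exists d : T -> T -> R,
    [/\ forall x y, d x y = 0 <-> x = y,
        forall x y, d x y = d y x,
        forall x y z, d x z <= d x y + d y z,
        forall A : set T, open A <->
          (forall x, A x -> exists2 e : R, 0 < e & [set y | d x y < e] `<=` A) &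
        forall u : nat -> T,
          (forall e : R, 0 < e -> exists N : nat, forall p q : nat,
              (N <= p)%N -> (N <= q)%N -> d (u p) (u q) < e) ->
          exists l : T, u @ \oo --> l].

Definition prodS (n : nat) (S : 'I_n -> ptopologicalType) := prod_topology S.
Definition borelS (n : nat) (S : 'I_n -> ptopologicalType) :=
  g_sigma_algebraType (@open (prodS S)).

Definition merge (n : nat) (S : 'I_n -> ptopologicalType) (I : {set 'I_n})
  (x y : borelS S) : borelS S :=
  (fun i => if i \in I then y i else x i) : prodS S.

Local Open Scope ereal_scope.

(* The conditional law m I x is a
   probability measure on S of which only the I-coordinates are used
   (i.e. its image on prod_{i in I} S_i is m_{xbar_I}); it depends on x only
   through xbar_I, is measurable in x, and satisfies the disintegration
   formula. *)
Definition is_disintegration (n : nat) (S : 'I_n -> ptopologicalType)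
  (R : realType) (mu : probability (borelS S) R) (I : {set 'I_n})
  (mI : borelS S -> probability (borelS S) R) : Prop :=
  [/\ (forall A : set (borelS S), measurable A ->
         measurable_fun setT (fun x => mI x A)),
      (forall x x' : borelS S, (forall i, i \notin I -> x i = x' i) ->
         mI x = mI x') &
      (forall g : borelS S -> \bar R, measurable_fun setT g ->
         (forall x, 0 <= g x) ->
         \int[mu]_x g x = \int[mu]_x (\int[mI x]_y g (merge I x y)))].

Definition hI (n : nat) (S : 'I_n -> ptopologicalType) (R : realType)
  (m : {set 'I_n} -> borelS S -> probability (borelS S) R)
  (I : {set 'I_n}) (g : borelS S -> \bar R) (x : borelS S) : \bar R :=
  ((Num.sqrt (2 : R))^-1)%:E *
  ess_sup (m I x \x m I x)
    (fun p => `| g (merge I x p.1) - g (merge I x p.2) |).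

Definition hiter (n : nat) (S : 'I_n -> ptopologicalType) (R : realType)
  (m : {set 'I_n} -> borelS S -> probability (borelS S) R)
  (s : seq {set 'I_n}) (g : borelS S -> \bar R) : borelS S -> \bar R :=
  foldr (fun I acc => hI m I acc) g s.

Definition hnorm (n : nat) (S : 'I_n -> ptopologicalType) (R : realType)
  (m : {set 'I_n} -> borelS S -> probability (borelS S) R)
  (Icol : {set {set 'I_n}}) (g : borelS S -> \bar R) (x : borelS S) : \bar R :=
  sqrte (\sum_(I in Icol) (hI m I g x) ^+ 2).

Definition hnormd (n : nat) (S : 'I_n -> ptopologicalType) (R : realType)
  (m : {set 'I_n} -> borelS S -> probability (borelS S) R)
  (Icol : {set {set 'I_n}}) (d : nat) (g : borelS S -> \bar R) (x : borelS S)
  : \bar R :=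
  sqrte (\sum_(s : d.-tuple {set 'I_n} | all (fun I => I \in Icol) s)
           (hiter m s g x) ^+ 2).

From Pilot Require Import Defs.
From HB Require Import structures.
From mathcomp Require Import all_boot all_order all_algebra.
From mathcomp Require Import all_classical all_reals all_analysis.
From mathcomp Require Import ess_sup_inf measurable_realfun lebesgue_measure lebesgue_integral kernel.
From mathcomp Require Import lra.
Import Order.TTheory GRing.Theory Num.Theory.
Import numFieldNormedType.Exports.
Local Open Scope classical_set_scope.
Local Open Scope ring_scope.

(* Write G = |h^(d) f| = (sum_s (h_s f)^2)^(1/2), s ranging over Icol^d.  For each I,
   the reverse triangle inequality in l^2 bounds |G(xbar_I, y_I) - G(xbar_I, z_I)|
   by the l^2 norm of the family |h_s f(xbar_I, y_I) - h_s f(xbar_I, z_I)|, and a.e.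
   each member is at most its essential supremum sqrt 2 * h_I h_s f(x).  Hence
   h_I G <= (sum_s (h_I h_s f)^2)^(1/2), and summing squares over I in Icol gives
   |h G|^2 <= |h^(d+1) f|^2. *)

Lemma big_tuple_cons (R : Type) (idx : R) (op : Monoid.com_law idx)
    (X : finType) (Q : pred X) (d : nat) (F : d.+1.-tuple X -> R) :
  \big[op/idx]_(t : d.+1.-tuple X | all Q t) F t =
  \big[op/idx]_(I | Q I) \big[op/idx]_(s : d.-tuple X | all Q s) F (cons_tuple I s).
Proof.
rewrite pair_big_dep (reindex (fun p : X * d.-tuple X => cons_tuple p.1 p.2)) //=.
exists (fun t => (thead t, behead_tuple t)) => [[I s] _ | t _].
  by rewrite theadE; congr pair; apply: val_inj.
by apply: val_inj; case: t => [[]].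
Qed.

Section finite_l2_norm.
Variables (R : rcfType) (T : finType) (P : pred T).
Implicit Types u v a : T -> R.

Lemma sum_sqr_ge0 v : 0 <= \sum_(i | P i) v i ^+ 2.
Proof. by apply: sumr_ge0 => i _; exact: sqr_ge0. Qed.

Lemma sqr_sum_mul_le v a :
  (\sum_(i | P i) v i * a i) ^+ 2 <=
  (\sum_(i | P i) v i ^+ 2) * (\sum_(i | P i) a i ^+ 2).
Proof.
rewrite expr2 !big_distrlr /= -(@ler_pM2l _ 2) // !mulr_natl !mulr2n.
rewrite [X in _ <= _ + X]exchange_big /= -!big_split /=.
apply: ler_sum => i Pi; rewrite -!big_split /=; apply: ler_sum => j Pj.
have := sqr_ge0 (v i * a j - v j * a i); nra.
Qed.

Lemma sum_mul_le_sqrt v a :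
  \sum_(i | P i) v i * a i <=
  Num.sqrt (\sum_(i | P i) v i ^+ 2) * Num.sqrt (\sum_(i | P i) a i ^+ 2).
Proof.
rewrite -sqrtrM ?sum_sqr_ge0 // (le_trans (ler_norm _)) // -sqrtr_sqr.
rewrite ler_sqrt ?mulr_ge0 ?sum_sqr_ge0 //.
exact: sqr_sum_mul_le.
Qed.

Lemma sqrt_sum_sqr_le_add u v a :
  (forall i, P i -> 0 <= u i <= v i + a i) ->
  Num.sqrt (\sum_(i | P i) u i ^+ 2) <=
  Num.sqrt (\sum_(i | P i) v i ^+ 2) + Num.sqrt (\sum_(i | P i) a i ^+ 2).
Proof.
move=> uva.
set V := Num.sqrt (\sum_(i | P i) v i ^+ 2); set B := Num.sqrt (\sum_(i | P i) a i ^+ 2).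
have V0 : 0 <= V := sqrtr_ge0 _.
have B0 : 0 <= B := sqrtr_ge0 _.
rewrite -(ger0_norm (addr_ge0 V0 B0)) -sqrtr_sqr ler_sqrt ?sqr_ge0 //.
apply: (@le_trans _ _ (\sum_(i | P i) (v i + a i) ^+ 2)).
  by apply: ler_sum => i /uva /andP[u0 uva_i]; rewrite lerXn2r ?nnegrE ?(le_trans u0).
rewrite sqrrD (eq_bigr _ (fun i _ => sqrrD (v i) (a i))) big_split big_split /= sumrMnl.
rewrite !sqr_sqrtr ?sum_sqr_ge0 // lerD2r lerD2l lerMn2r /=.
exact: sum_mul_le_sqrt.
Qed.

Lemma dist_sqrt_sum_sqr_le u v a :
  (forall i, P i -> 0 <= u i) -> (forall i, P i -> 0 <= v i) ->
  (forall i, P i -> `|u i - v i| <= a i) ->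
  `|Num.sqrt (\sum_(i | P i) u i ^+ 2) - Num.sqrt (\sum_(i | P i) v i ^+ 2)|
    <= Num.sqrt (\sum_(i | P i) a i ^+ 2).
Proof.
move=> u0 v0 uva; rewrite ler_norml lerNl opprB !lerBlDl; apply/andP; split.
- apply: sqrt_sum_sqr_le_add => i Pi.
  by rewrite v0 //= -lerBlDl (le_trans (ler_norm _)) // distrC uva.
- apply: sqrt_sum_sqr_le_add => i Pi.
  by rewrite u0 //= -lerBlDl (le_trans (ler_norm _)) // uva.
Qed.
End finite_l2_norm.

Local Open Scope ereal_scope.

Lemma sume_sqr_ge0 (R : realType) (I : Type) (r : seq I) (P : pred I) (F : I -> \bar R) :
  0 <= \sum_(i <- r | P i) F i ^+ 2.
Proof. by apply: sume_ge0 => i _; exact: sqre_ge0. Qed.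

Lemma dist_sqrte_sum_sqr_le (R : realType) (T : finType) (P : pred T)
    (u v a : T -> \bar R) :
  (forall i, P i -> 0 <= u i) -> (forall i, P i -> 0 <= v i) ->
  (forall i, P i -> `|u i - v i| <= a i) ->
  `|sqrte (\sum_(i | P i) u i ^+ 2) - sqrte (\sum_(i | P i) v i ^+ 2)|
    <= sqrte (\sum_(i | P i) a i ^+ 2).
Proof.
move=> u0 v0 uva.
have a0 i : P i -> 0 <= a i by move=> Pi; exact: le_trans (abse_ge0 _) (uva i Pi).
have [afin|] := boolP [forall (i | P i), a i \is a fin_num]; last first.
  rewrite negb_forall_in => /exists_inP[i Pi ainf].
  have {ainf}ai : a i = +oo by move: ainf (a0 i Pi); case: (a i).
  have -> : \sum_(j | P j) a j ^+ 2 = +oo.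
    by rewrite (bigD1 i) //= ai mulyy addye // gt_eqF // (lt_le_trans ltNy0) ?sume_sqr_ge0.
  by rewrite leey.
have {}afin i : P i -> a i \is a fin_num by move=> Pi; exact: (forall_inP afin).
have uvfin i : P i -> u i \is a fin_num /\ v i \is a fin_num.
  move=> Pi; move: (uva i Pi) (afin i Pi) (u0 i Pi) (v0 i Pi).
  by case: (u i) (v i) (a i) => [x||] [y||] [z||].
have ufin i (Pi : P i) := (uvfin i Pi).1.
have vfin i (Pi : P i) := (uvfin i Pi).2.
have sum_sqrE (w : T -> \bar R) : (forall i, P i -> w i \is a fin_num) ->
    \sum_(i | P i) w i ^+ 2 = (\sum_(i | P i) (fine (w i)) ^+ 2)%:E.
  by move=> wfin; rewrite -sumEFin; apply: eq_bigr => i Pi; rewrite EFin_expe fineK ?wfin.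
rewrite (sum_sqrE u ufin) (sum_sqrE v vfin) (sum_sqrE a afin) /= lee_fin.
apply: dist_sqrt_sum_sqr_le => i Pi; rewrite ?fine_ge0 ?u0 ?v0 //.
move: (uva i Pi).
by rewrite -(fineK (ufin i Pi)) -(fineK (vfin i Pi)) -(fineK (afin i Pi)) /= lee_fin.
Qed.

Lemma ess_sup_dist_sqrte_sum_sqr_le d (T : measurableType d) (R : realType)
    (nu : {measure set T -> \bar R}) (I : finType) (P : pred I)
    (u v : I -> T -> \bar R) :
  (forall i t, P i -> 0 <= u i t) -> (forall i t, P i -> 0 <= v i t) ->
  ess_sup nu (fun t => `|sqrte (\sum_(i | P i) u i t ^+ 2)
                         - sqrte (\sum_(i | P i) v i t ^+ 2)|)
  <= sqrte (\sum_(i | P i) ess_sup nu (fun t => `|u i t - v i t|) ^+ 2).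
Proof.
move=> u0 v0; apply/ess_supP.
have := filter_forall (ae_filter_ringOfSetsType nu) (fun i => ess_sup_ge nu (fun t => `|u i t - v i t|)).
apply: filterS => t uv_le_sup.
by apply: dist_sqrte_sum_sqr_le => i Pi; [exact: u0|exact: v0|exact: uv_le_sup].
Qed.

Lemma product_probability_setT_gt0 d1 d2 (T1 : measurableType d1)
    (T2 : measurableType d2) (R : realType) (P : probability T1 R) (Q : probability T2 R) :
  0 < (P \x Q) [set: T1 * T2].
Proof. by rewrite probability_setT lte01. Qed.

Section h_operator.
Variables (n : nat) (S : 'I_n -> ptopologicalType) (R : realType).
Variable m : {set 'I_n} -> borelS S -> probability (borelS S) R.

Lemma hI_ge0 I g x : 0 <= hI m I g x.
Proof.
rewrite /hI mule_ge0 ?lee_fin ?invr_ge0 ?sqrtr_ge0 //; apply: ess_sup_gee.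
  exact: product_probability_setT_gt0.
by apply: nearW => p; exact: abse_ge0.
Qed.

Lemma hiter_ge0 s g x : s != [::] -> 0 <= hiter m s g x.
Proof. by case: s => // I s _; exact: hI_ge0. Qed.

Lemma hI_sqrte_sum_le (T : finType) (P : pred T) (g : T -> borelS S -> \bar R) I x :
  (forall s y, P s -> 0 <= g s y) ->
  hI m I (fun y => sqrte (\sum_(s | P s) g s y ^+ 2)) x
  <= sqrte (\sum_(s | P s) hI m I (g s) x ^+ 2).
Proof.
move=> g0; rewrite /hI; set c := (Num.sqrt 2)^-1%R.
have c0 : (0 <= c)%R by rewrite invr_ge0 sqrtr_ge0.
have sqrMc e : (c%:E * e) ^+ 2 = (c ^+ 2)%:E * e ^+ 2 by rewrite !expe2 muleACA -EFinM.
under eq_bigr do rewrite sqrMc.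
rewrite -ge0_sume_distrr => [|s _]; last exact: sqre_ge0.
rewrite sqrteM ?lee_fin ?sqr_ge0 // EFin_expe sqrte_sqr gee0_abs ?lee_fin //.
apply: lee_wpmul2l; first by rewrite lee_fin.
apply: (@ess_sup_dist_sqrte_sum_sqr_le _ _ _ _ _ _
          (fun s p => g s (Defs.merge I x p.1)) (fun s p => g s (Defs.merge I x p.2)));
  by move=> s p Ps; exact: g0.
Qed.

End h_operator.

Local Close Scope ereal_scope.

Theorem lemma2p3 (R : realType) (n : nat) (S : 'I_n -> ptopologicalType)
  (HS : forall i, polish R (S i))
  (mu : probability (borelS S) R)
  (Icol : {set {set 'I_n}})
  (m : {set 'I_n} -> borelS S -> probability (borelS S) R)
  (Hm : forall I, I \in Icol -> is_disintegration mu I (m I))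
  (f : borelS S -> R)
  (Hfm : measurable_fun setT f)
  (Hfb : (ess_sup mu (fun x => (`| f x |)%:E) < +oo)%E)
  (d : nat) (Hd : (1 <= d)%N) :
  forall x : borelS S,
    (hnorm m Icol (hnormd m Icol d (fun y => (f y)%:E)) x
     <= hnormd m Icol d.+1 (fun y => (f y)%:E) x)%E.
Proof.
move=> x; case: d Hd => // d _.
rewrite /hnorm [X in (_ <= X)%E]/hnormd lee_sqrt ?sume_sqr_ge0 // big_tuple_cons.
apply: lee_sum => I _.
rewrite -[X in (_ <= X)%E]sqr_sqrte ?sume_sqr_ge0 // lee_sqr ?hI_ge0 ?sqrte_ge0 // /hnormd.
apply: (@hI_sqrte_sum_le _ _ _ m _ (fun s : d.+1.-tuple _ => all (mem Icol) s)).
by move=> s y _; apply: hiter_ge0; rewrite -size_eq0 size_tuple.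
Qed.
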